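(* Let $\mathcal{E}=\{|\varphi_i\rangle,p_i\}_{i\in\mathcal I}$ be a finite pure-state ensemble with $m=|\mathcal I|$ states, and let $R\ge0$. Then in the definition of $M(\mathcal{E},R)$ it suffices to consider conditional distributions $p(j|i)$ with at most $m+1$ values of $j$. That is, $M(\mathcal{E},R)$ equals the infimum of $S(A:B|C)$ over conditional distributions with $|\mathcal J|\le m+1$ and $S(A:C)\le R$.
   Context: Let $\varphi_i=|\varphi_i\rangle\langle\varphi_i|$ be pure states on $\mathbb{C}^d$. For a finite set $\mathcal J$ and conditional distribution $p(j|i)$, let $\rho^{ABC}=\sum_ip_i|i\rangle\langle i|\otimes\varphi_i\otimes\sum_jp(j|i)|j\rangle\langle j|$ with orthonormal $\{|i\rangle\}$ and $\{|j\rangle\}$. Define $S(A:C)=S(A)+S(C)-S(AC)$ and $S(A:B|C)=S(AC)+S(BC)-S(ABC)-S(C)$ (von Neumann entropies, base 2). $M(\mathcal{E},R)=\inf\{S(A:B|C):S(A:C)\le R\}$ over all finite $\mathcal J$ and all conditional distributions. *)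

From HB Require Import structures.
From mathcomp Require Import all_boot all_order all_algebra.
From mathcomp Require Import complex.
From mathcomp Require Import all_classical all_reals all_analysis.

Set Implicit Arguments.
Unset Strict Implicit.
Unset Printing Implicit Defensive.

Import Order.TTheory GRing.Theory Num.Theory.
Local Open Scope ring_scope.
Local Open Scope complex_scope.

Definition eta2 {R : realType} (x : R) : R :=
  if x <= 0 then 0 else - x * (ln x / ln 2).

(* The eigenvalues (with multiplicity) of a square complex matrix:
   a sequence s with char_poly A = prod_(z in s) (X - z). Such an s exists
   since R[i] is algebraically closed, and it is unique up to permutation. *)
Definition spectrum {R : realType} {k : nat} (A : 'M[R[i]]_k) : seq R[i] :=
  xget [::] (fun s => char_poly A = \prod_(z <- s) ('X - z%:P)).

(* von Neumann entropy (base 2) S(A) = - tr A log2 A = sum_k -l_k log2 l_k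
   over the eigenvalues l_k (real for density matrices). *)
Definition vN_entropy {R : realType} {k : nat} (A : 'M[R[i]]_k) : R :=
  \sum_(z <- spectrum A) eta2 (complex.Re z).

(* An operator on C^T, T a finite index type (orthonormal basis {|t>}),
   given by its matrix entries <x| rho |y>. *)
Definition op_mx {R : realType} {T : finType} (f : T -> T -> R[i])
  : 'M[R[i]]_#|T| := \matrix_(a, b) f (enum_val a) (enum_val b).

Definition Sop {R : realType} {T : finType} (f : T -> T -> R[i]) : R :=
  vN_entropy (op_mx f).

(* rho^{ABC} = sum_i p_i |i><i| (x) phi_i (x) sum_j p(j|i) |j><j|,
   on C^m (x) C^d (x) C^n, indices (i, b, j). *)
Definition rhoABC {R : realType} {m d n : nat} (p : 'I_m -> R)
  (phi : 'I_m -> 'I_d -> R[i]) (q : 'I_m -> 'I_n -> R)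
  (x y : 'I_m * 'I_d * 'I_n) : R[i] :=
  if (x.1.1 == y.1.1) && (x.2 == y.2) then
    (p x.1.1 * q x.1.1 x.2)%:C * (phi x.1.1 x.1.2 * (phi x.1.1 y.1.2)^* )
  else 0.

Section Reduced.
Context {R : realType} {m d n : nat}.
Variable rho : 'I_m * 'I_d * 'I_n -> 'I_m * 'I_d * 'I_n -> R[i].

Definition ptrA (x y : 'I_m) : R[i] :=
  \sum_(b : 'I_d) \sum_(j : 'I_n) rho (x, b, j) (y, b, j).
Definition ptrC (x y : 'I_n) : R[i] :=
  \sum_(i : 'I_m) \sum_(b : 'I_d) rho (i, b, x) (i, b, y).
Definition ptrAC (x y : 'I_m * 'I_n) : R[i] :=
  \sum_(b : 'I_d) rho (x.1, b, x.2) (y.1, b, y.2).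
Definition ptrBC (x y : 'I_d * 'I_n) : R[i] :=
  \sum_(i : 'I_m) rho (i, x.1, x.2) (i, y.1, y.2).
End Reduced.

Definition mutinfAC {R : realType} {m d n : nat} (p : 'I_m -> R)
  (phi : 'I_m -> 'I_d -> R[i]) (q : 'I_m -> 'I_n -> R) : R :=
  let rho := rhoABC p phi q in
  Sop (ptrA rho) + Sop (ptrC rho) - Sop (ptrAC rho).

Definition condmutinfABgC {R : realType} {m d n : nat} (p : 'I_m -> R)
  (phi : 'I_m -> 'I_d -> R[i]) (q : 'I_m -> 'I_n -> R) : R :=
  let rho := rhoABC p phi q in
  Sop (ptrAC rho) + Sop (ptrBC rho) - Sop rho - Sop (ptrC rho).

Definition cond_distr {R : realType} {m n : nat} (q : 'I_m -> 'I_n -> R) :=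
  (forall i j, 0 <= q i j) /\ (forall i, \sum_(j : 'I_n) q i j = 1).

Definition M_E {R : realType} {m d : nat} (p : 'I_m -> R)
  (phi : 'I_m -> 'I_d -> R[i]) (Rate : R) : \bar R :=
  ereal_inf [set x : \bar R | exists (n : nat) (q : 'I_m -> 'I_n -> R),
    [/\ cond_distr q, mutinfAC p phi q <= Rate &
        x = (condmutinfABgC p phi q)%:E]].

From HB Require Import structures.
From mathcomp Require Import all_boot all_order all_algebra all_fingroup.
From mathcomp Require Import complex.
From mathcomp Require Import all_classical all_reals all_analysis.
From mathcomp Require Import ring.
Import Order.TTheory GRing.Theory Num.Theory.
Local Open Scope ring_scope.
Local Open Scope complex_scope.
Set Implicit Arguments.
Unset Strict Implicit.
Unset Printing Implicit Defensive.

(* The state rho^{ABC} is block diagonal in j, so every entropy entering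
   S(A:C) and S(A:B|C) is a sum over j of a function of the column
   c_j = (p_i p(j|i))_i of the joint distribution:
   S(A:C) = H(p) + sum_j F(c_j) and S(A:B|C) = sum_j G(c_j), where F and G are
   positively homogeneous of degree one.  Since the columns sum to p, a
   Caratheodory argument in R^(m+1) (the columns together with their F-values)
   keeps p and sum_j F(c_j) while replacing the columns by at most m+1
   positive multiples of some of them, without increasing sum_j G(c_j).
   Rescaled columns summing to p come from a conditional distribution again. *)

Lemma perm_codom_first N k (h : 'I_k -> 'I_N) : injective h ->
  exists (e : (k + (N - k) = N)%N) (s : 'S_N),
    (forall a, s (cast_ord e (lshift _ a)) = h a) /\
    (forall b, s (cast_ord e (rshift k b)) \notin codom h).
Proof.
move=> h_inj.
have card_codom_h : #|codom h| = k by rewrite card_codom // card_ord.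
have k_le : (k <= N)%N by rewrite -card_codom_h -[X in (_ <= X)%N]card_ord max_card.
have card_out : #|[predC codom h]| = (N - k)%N.
  have := cardC (mem (codom h)).
  by rewrite card_codom_h card_ord => /(congr1 (subn^~ k)); rewrite addKn => <-.
have e : (k + (N - k) = N)%N by rewrite subnKC.
pose c_ b : 'I_N := enum_val (cast_ord (esym card_out) b).
have c_out b : c_ b \notin codom h by have := enum_valP (cast_ord (esym card_out) b).
pose g (u : 'I_k + 'I_(N - k)) : 'I_N :=
  match u with inl a => h a | inr b => c_ b end.
have g_inj : injective g.
  case=> [a|b] [a'|b'] /=.
  - by move/h_inj ->.
  - by move=> ha; have := c_out b'; rewrite -ha codom_f.
  - by move=> hb; have := c_out b; rewrite hb codom_f.
  - by move/enum_val_inj/cast_ord_inj ->.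
pose sigma x := g (fintype.split (cast_ord (esym e) x)).
have sigma_inj : injective sigma.
  by move=> x y /g_inj /(can_inj splitK); apply: cast_ord_inj.
exists e, (perm sigma_inj); split => [a|b]; rewrite permE /sigma cast_ordK.
  by rewrite (unsplitK (inl _ a)).
by rewrite (unsplitK (inr _ b)); apply: c_out.
Qed.

Section BlockDeterminants.
Variable R : comNzRingType.

Lemma det_mxsub_perm n (s : 'S_n) (B : 'M[R]_n) : \det (mxsub s s B) = \det B.
Proof.
have -> : mxsub s s B = row_perm s (col_perm s B) by apply/matrixP => x y; rewrite !mxE.
rewrite row_permE col_permE !det_mulmx !det_perm odd_permV.
by rewrite mulrCA -signr_addb addbb expr0 mulr1.
Qed.

Lemma det_castmx n n' (e : n = n') (A : 'M[R]_n) : \det (castmx (e, e) A) = \det A.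
Proof. by case: n' / e. Qed.

Lemma det_mxsub_codom N k (B : 'M[R]_N) (h : 'I_k -> 'I_N) : injective h ->
  (forall x y, x \notin codom h -> B x y = (x == y)%:R) ->
  (forall x y, y \notin codom h -> B x y = (x == y)%:R) ->
  \det B = \det (mxsub h h B).
Proof.
move=> h_inj Bx By.
have [e [s [s_lshift s_rshift]]] := perm_codom_first h_inj.
have s_neq a b : h a != s (cast_ord e (rshift k b)).
  by apply: contraNneq (s_rshift b) => <-; apply: codom_f.
rewrite -(det_mxsub_perm s B) -(det_castmx (esym e)).
have -> : castmx (esym e, esym e) (mxsub s s B) = block_mx (mxsub h h B) 0 0 1%:M.
  apply/matrixP => i j; rewrite castmxE /= esymK.
  case: (split_ordP i) => a ->; case: (split_ordP j) => b ->.
  - by rewrite block_mxEul !mxE !s_lshift.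
  - by rewrite block_mxEur !mxE s_lshift By // (negbTE (s_neq a b)).
  - by rewrite block_mxEdl !mxE s_lshift Bx // eq_sym (negbTE (s_neq b a)).
  - rewrite block_mxEdr !mxE Bx // (inj_eq perm_inj) (inj_eq (@cast_ord_inj _ _ _)).
    by rewrite eq_rshift.
by rewrite det_ublock det1 mulr1.
Qed.

Variables (N : nat) (J : finType) (key : 'I_N -> J) (M : 'M[R]_N).
Hypothesis M_block : forall x y, key x != key y -> M x y = 0.

Definition keep_blocks (s : seq J) : 'M[R]_N :=
  \matrix_(x, y) if key x \in s then M x y else (x == y)%:R.

Lemma keep_blocks_cons j s : j \notin s ->
  keep_blocks (j :: s) = keep_blocks s *m keep_blocks [:: j].
Proof.
move=> js; apply/matrixP => x y; rewrite !mxE inE.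
case hx: (key x \in s).
  have -> : key x == j = false by apply/negbTE; apply: contraNneq js => <-.
  transitivity ((M *m 1%:M) x y); first by rewrite mulmx1.
  rewrite !mxE; apply: eq_bigr => z _; rewrite !mxE hx inE.
  case: (key z =P j) => kz //.
  by rewrite M_block ?mul0r // kz; apply: contraTneq hx => ->.
rewrite orbF; transitivity ((1%:M *m keep_blocks [:: j]) x y).
  by rewrite mul1mx !mxE inE.
by rewrite !mxE; apply: eq_bigr => z _; rewrite !mxE hx.
Qed.

Lemma det_keep_blocks s : uniq s ->
  \det (keep_blocks s) = \prod_(j <- s) \det (keep_blocks [:: j]).
Proof.
elim: s => [_|j s IH /= /andP [js s_uniq]].
  rewrite big_nil -(det1 R N); congr (\det _); apply/matrixP => x y.
  by rewrite !mxE.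
by rewrite keep_blocks_cons // det_mulmx IH // big_cons mulrC.
Qed.

Lemma det_block_diag : \det M = \prod_(j : J) \det (keep_blocks [:: j]).
Proof.
rewrite -big_enum /= -det_keep_blocks ?enum_uniq //; congr (\det _).
by apply/matrixP => x y; rewrite !mxE mem_enum.
Qed.

End BlockDeterminants.

Definition enum_mx {C : Type} {T : finType} (f : T -> T -> C) : 'M[C]_#|T| :=
  \matrix_(a, b) f (enum_val a) (enum_val b).

Section CharPoly.
Variable C : comNzRingType.

Lemma char_poly_enum_diag (T : finType) (g : T -> C) :
  char_poly (enum_mx (fun x y => if x == y then g x else 0)) =
  \prod_(x : T) ('X - (g x)%:P).
Proof.
rewrite char_poly_trig; last first.
  apply/is_trig_mxP => i j lt_ij; rewrite !mxE (inj_eq enum_val_inj).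
  by case: eqP => // eq_ij; rewrite eq_ij ltnn in lt_ij.
rewrite (big_enum_val (fun x => 'X - (g x)%:P)) /=.
by apply: eq_bigr => i _; rewrite !mxE eqxx.
Qed.

Lemma char_poly_enum_block (T J : finType) (f : T * J -> T * J -> C) :
  (forall x y, x.2 != y.2 -> f x y = 0) ->
  char_poly (enum_mx f) =
  \prod_(j : J) char_poly (enum_mx (fun a b : T => f (a, j) (b, j))).
Proof.
move=> f_block.
rewrite /char_poly (det_block_diag (key := fun x => (enum_val x).2)); last first.
  move=> x y kxy; rewrite !mxE.
  have -> : (x == y) = false by apply: contraNF kxy => /eqP ->.
  by rewrite mulr0n f_block // subrr.
apply: eq_bigr => j _.
pose h (a : 'I_#|T|) := enum_rank (enum_val a, j).
have h_inj : injective h by move=> a b /enum_rank_inj [] /enum_val_inj.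
have h_val a : enum_val (h a) = (enum_val a, j) by rewrite /h enum_rankK.
have out_block x : x \notin codom h -> (enum_val x).2 != j.
  apply: contra => /eqP kx; apply/codomP; exists (enum_rank (enum_val x).1).
  by rewrite /h enum_rankK -kx -surjective_pairing enum_valK.
rewrite (@det_mxsub_codom _ _ _ _ h h_inj).
- congr (\det _); apply/matrixP => a b.
  by rewrite !mxE !h_val /= !inE eqxx (inj_eq h_inj).
- by move=> x y /out_block kx; rewrite !mxE inE (negbTE kx).
- move=> x y /out_block ky; rewrite !mxE inE; case: eqP => // kx.
  have -> : (x == y) = false by apply/negbTE; apply: contraNneq ky => <-; apply/eqP.
  by rewrite mulr0n f_block ?subrr // kx eq_sym.
Qed.

End CharPoly.

Lemma char_polyZ (F : fieldType) n (A : 'M[F]_n) (c : F) (s : seq F) : c != 0 ->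
  char_poly A = \prod_(z <- s) ('X - z%:P) ->
  char_poly (c *: A) = \prod_(z <- s) ('X - (c * z)%:P).
Proof.
move=> c_neq0 charA.
have size_s : size s = n.
  by have := size_char_poly A; rewrite charA size_prod_XsubC => -[].
(* Substituting c^-1 X for X in det (X - A) gives c^-n det (X - c A). *)
have comp_char : map_mx (comp_poly (c^-1 *: 'X)) (char_poly_mx A) =
                 c^-1%:P *: char_poly_mx (c *: A).
  apply/matrixP => x y; rewrite !mxE.
  rewrite rmorphB rmorphMn /= comp_polyC comp_polyX mulrBr.
  by rewrite -polyCM mulrA mulVf // mul1r mul_polyC -scalerMnr.
have := det_map_mx (comp_poly (c^-1 *: 'X)) (char_poly_mx A).
rewrite comp_char detZ -/(char_poly A) -/(char_poly (c *: A)) charA rmorph_prod /=.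
move=> e.
have -> : char_poly (c *: A) = c%:P ^+ n * (c^-1%:P ^+ n * char_poly (c *: A)).
  by rewrite mulrA -exprMn -polyCM mulfV // expr1n mul1r.
rewrite e -size_s -(count_predT s) -iter_mulr_1 -big_const_seq -big_split /=.
apply: eq_bigr => z _.
rewrite comp_polyB comp_polyC comp_polyX mulrBr mul_polyC scalerA mulfV // scale1r.
by rewrite -polyCM.
Qed.

Section Entropy.
Variable R : realType.

Lemma eta2_0 : eta2 (0 : R) = 0.
Proof. by rewrite /eta2 lexx. Qed.

Lemma spectrumP k (A : 'M[R[i]]_k) :
  char_poly A = \prod_(z <- spectrum A) ('X - z%:P).
Proof.
rewrite /spectrum; set P := (fun s => _).
suff : P (xget [::] P) by [].
apply: xgetPex; have [s Hs] := closed_field_poly_normal (char_poly A).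
by exists s; rewrite /P {1}Hs (monicP (char_poly_monic A)) scale1r.
Qed.

Lemma vN_entropy_roots k (A : 'M[R[i]]_k) s :
  char_poly A = \prod_(z <- s) ('X - z%:P) ->
  vN_entropy A = \sum_(z <- s) eta2 (complex.Re z).
Proof.
move=> charA; apply: perm_big; apply: prod_XsubC_eq.
by rewrite -spectrumP.
Qed.

Lemma sum_spectrum k (A : 'M[R[i]]_k) : \sum_(z <- spectrum A) z = \tr A.
Proof.
have size_s : size (spectrum A) = k.
  by have := size_char_poly A; rewrite spectrumP size_prod_XsubC => -[].
case: k A size_s => [|k] A size_s.
  by move/size0nil: size_s => ->; rewrite big_nil /mxtrace big_ord0.
have := char_poly_trace A (ltn0Sn k).
have := @coefPn_prod_XsubC _ (spectrum A); rewrite size_s -spectrumP /= => -> //.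
by move/eqP; rewrite eqr_opp => /eqP.
Qed.

Lemma eq_Sop (T : finType) (f g : T -> T -> R[i]) : f =2 g -> Sop f = Sop g.
Proof. by move=> fg; congr Sop; apply/funext => x; apply/funext => y; apply: fg. Qed.

Lemma Sop_diag (T : finType) (g : T -> R[i]) :
  Sop (fun x y : T => if x == y then g x else 0) =
  \sum_(x : T) eta2 (complex.Re (g x)).
Proof.
rewrite /Sop (@vN_entropy_roots _ _ [seq g x | x <- enum T]).
  by rewrite big_map big_enum.
by rewrite char_poly_enum_diag big_map big_enum.
Qed.

Lemma Sop0 (T : finType) : Sop (fun _ _ : T => 0 : R[i]) = 0.
Proof.
rewrite (@eq_Sop _ _ (fun x y => if x == y then 0 else 0)); last by move=> x y; case: eqP.
by rewrite Sop_diag big1 // => x _; exact: eta2_0.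
Qed.

Lemma Sop_block (T J : finType) (f : T * J -> T * J -> R[i]) :
  (forall x y, x.2 != y.2 -> f x y = 0) ->
  Sop f = \sum_(j : J) Sop (fun a b : T => f (a, j) (b, j)).
Proof.
move=> f_block; pose blocks j := op_mx (fun a b : T => f (a, j) (b, j)).
rewrite /Sop (@vN_entropy_roots _ _ (flatten [seq spectrum (blocks j) | j <- enum J])).
  by rewrite big_flatten big_map big_enum.
rewrite char_poly_enum_block // big_flatten big_map big_enum /=.
by apply: eq_bigr => j _; rewrite -spectrumP.
Qed.

Definition psd_fun (T : finType) (f : T -> T -> R[i]) :=
  exists (K : finType) (w : K -> R) (u : K -> T -> R[i]),
    (forall k, 0 <= w k) /\
    forall x y, f x y = \sum_(k : K) (w k)%:C * (u k x * (u k y)^*).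

Lemma spectrum_psd_ge0 (T : finType) (f : T -> T -> R[i]) : psd_fun f ->
  forall z, z \in spectrum (op_mx f) -> 0 <= z.
Proof.
move=> [K [w [u [w_ge0 f_def]]]] z z_spec.
have : root (char_poly (op_mx f)) z by rewrite spectrumP root_prod_XsubC.
rewrite -eigenvalue_root_char => /eigenvalueP [v vA v_neq0].
(* Rayleigh quotient: z = <v|A|v> / <v|v>, and <v|A|v> = sum_k w_k |<v|u_k>|^2. *)
pose A := op_mx f.
pose Q := \sum_a \sum_b v 0 a * A a b * (v 0 b)^*.
pose r := \sum_b v 0 b * (v 0 b)^*.
have Q_eigen : Q = z * r.
  rewrite /Q exchange_big /r mulr_sumr; apply: eq_bigr => b _.
  rewrite -mulr_suml mulrA.
  by have := congr1 (fun M : 'rV_(#|T|) => M 0 b) vA; rewrite !mxE => ->.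
have Q_gram : Q = \sum_k (w k)%:C * ((\sum_a v 0 a * u k (enum_val a)) *
                                     (\sum_a v 0 a * u k (enum_val a))^*).
  rewrite /Q /A.
  under eq_bigr => a _ do under eq_bigr => b _ do
    rewrite mxE f_def mulr_sumr mulr_suml.
  under eq_bigr => a _ do rewrite exchange_big /=.
  rewrite exchange_big /=; apply: eq_bigr => k _.
  rewrite rmorph_sum /= mulr_suml mulr_sumr; apply: eq_bigr => a _.
  rewrite mulr_sumr mulr_sumr; apply: eq_bigr => b _.
  by rewrite rmorphM /=; ring.
have Q_ge0 : 0 <= Q.
  rewrite Q_gram; apply: sumr_ge0 => k _; apply: mulr_ge0; last exact: mulcJ_ge0.
  by rewrite ler0c.
have r_ge0 : 0 <= r by apply: sumr_ge0 => b _; exact: mulcJ_ge0.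
have r_neq0 : r != 0.
  apply: contraNneq v_neq0 => /(psumr_eq0P (fun b _ => mulcJ_ge0 (v 0 b))) v0.
  apply/eqP/matrixP => i b; rewrite ord1 !mxE.
  by have /eqP := v0 b isT; rewrite mulf_eq0 conjc_eq0 orbb => /eqP.
by rewrite (_ : z = Q / r) ?divr_ge0 // Q_eigen mulfK.
Qed.

Lemma eta2M (a x : R) : 0 <= a -> 0 <= x ->
  eta2 (a * x) = a * eta2 x - a * (ln a / ln 2) * x.
Proof.
rewrite le_eqVlt => /orP [/eqP <-|a_gt0]; first by rewrite !mul0r eta2_0 subr0.
rewrite le_eqVlt => /orP [/eqP <-|x_gt0]; first by rewrite mulr0 eta2_0 !mulr0 subr0.
rewrite /eta2 leNgt (mulr_gt0 a_gt0 x_gt0) /= [x <= 0]leNgt x_gt0 /= lnM ?posrE //.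
by rewrite mulrDl; ring.
Qed.

Lemma SopZ (T : finType) (f : T -> T -> R[i]) (a : R) : 0 < a -> psd_fun f ->
  Sop (fun x y => a%:C * f x y) =
  a * Sop f - a * (ln a / ln 2) * complex.Re (\sum_(x : T) f x x).
Proof.
move=> a_gt0 f_psd; rewrite /Sop.
have -> : op_mx (fun x y => a%:C * f x y) = a%:C *: op_mx f.
  by apply/matrixP => i j; rewrite !mxE.
rewrite (@vN_entropy_roots _ _ [seq a%:C * z | z <- spectrum (op_mx f)]).
  rewrite big_map.
  transitivity (\sum_(z <- spectrum (op_mx f))
     (a * eta2 (complex.Re z) - a * (ln a / ln 2) * complex.Re z)).
    apply: eq_big_seq => z z_spec.
    have := spectrum_psd_ge0 f_psd z_spec; rewrite lecE => /andP [_ Re_ge0].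
    rewrite -eta2M ?(ltW a_gt0) //; congr eta2.
    by case: z {z_spec Re_ge0} => x y /=; rewrite mul0r subr0.
  rewrite sumrB -!mulr_sumr -(@raddf_sum _ _ (@complex.Re R : Rcomplex R -> R)).
  rewrite sum_spectrum /vN_entropy /mxtrace (big_enum_val (fun x => f x x)) /=.
  by congr (_ - _ * complex.Re _); apply: eq_bigr => i _; rewrite mxE.
rewrite big_map; apply: char_polyZ; last exact: spectrumP.
by rewrite eq_complex /= negb_and (gt_eqF a_gt0).
Qed.

End Entropy.

Section ColumnDecomposition.
Context {R : realType} {m d : nat}.
Variables (p : 'I_m -> R) (phi : 'I_m -> 'I_d -> R[i]).
Hypothesis phi_normed : forall i, \sum_(b : 'I_d) phi i b * (phi i b)^* = 1.

Definition joint_col n (q : 'I_m -> 'I_n -> R) (j : 'I_n) (i : 'I_m) : R := p i * q i j.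

(* For the column c = (p_i p(j|i))_i of an outcome j, [mixB c] and [mixAB c]
   are the unnormalised conditional states of B and AB given j, and
   [mutinf_part c], [condmutinf_part c] are the contributions of j to
   S(A:C) - H(p) and to S(A:B|C). *)
Definition mixB (c : 'I_m -> R) (b b' : 'I_d) : R[i] :=
  \sum_i (c i)%:C * (phi i b * (phi i b')^*).

Definition mixAB (c : 'I_m -> R) (x y : 'I_m * 'I_d) : R[i] :=
  if x.1 == y.1 then (c x.1)%:C * (phi x.1 x.2 * (phi x.1 y.2)^*) else 0.

Definition mutinf_part (c : 'I_m -> R) : R :=
  eta2 (\sum_i c i) - \sum_i eta2 (c i).

Definition condmutinf_part (c : 'I_m -> R) : R :=
  \sum_i eta2 (c i) + Sop (mixB c) - Sop (mixAB c) - eta2 (\sum_i c i).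

Lemma sum_joint_col n (q : 'I_m -> 'I_n -> R) : cond_distr q ->
  forall i, \sum_j joint_col q j i = p i.
Proof. by move=> [_ q_sum1] i; rewrite -mulr_sumr q_sum1 mulr1. Qed.

Lemma sum_phi_normed (i : 'I_m) (a : R[i]) :
  \sum_(b : 'I_d) a * (phi i b * (phi i b)^*) = a.
Proof. by rewrite -mulr_sumr phi_normed mulr1. Qed.

Lemma Sop_ptrA n (q : 'I_m -> 'I_n -> R) : cond_distr q ->
  Sop (ptrA (rhoABC p phi q)) = \sum_i eta2 (p i).
Proof.
move=> [_ q_sum1].
rewrite (@eq_Sop _ _ _ (fun x y => if x == y then (p x)%:C else 0)) ?Sop_diag //.
move=> x y; rewrite /ptrA /rhoABC /=.
case: (x =P y) => [_|_]; last by rewrite big1 // => b _; rewrite big1.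
rewrite exchange_big /=.
under eq_bigr => j _ do rewrite eqxx sum_phi_normed.
by rewrite -rmorph_sum -mulr_sumr q_sum1 mulr1.
Qed.

Lemma Sop_ptrC n (q : 'I_m -> 'I_n -> R) :
  Sop (ptrC (rhoABC p phi q)) = \sum_j eta2 (\sum_i joint_col q j i).
Proof.
rewrite (@eq_Sop _ _ _ (fun x y => if x == y then (\sum_i joint_col q x i)%:C else 0)).
  by rewrite Sop_diag.
move=> x y; rewrite /ptrC /rhoABC /=.
case: (x =P y) => [_|_].
  by rewrite rmorph_sum; apply: eq_bigr => i _; rewrite eqxx sum_phi_normed.
by rewrite big1 // => i _; rewrite big1 // => b _; rewrite eqxx.
Qed.

Lemma Sop_ptrAC n (q : 'I_m -> 'I_n -> R) :
  Sop (ptrAC (rhoABC p phi q)) = \sum_j \sum_i eta2 (joint_col q j i).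
Proof.
rewrite (@eq_Sop _ _ _ (fun x y => if x == y then (joint_col q x.2 x.1)%:C else 0)).
  rewrite Sop_diag -(pair_big xpredT xpredT (fun i j => eta2 (joint_col q j i))) /=.
  exact: exchange_big.
move=> [x1 x2] [y1 y2]; rewrite /ptrAC /rhoABC /= xpair_eqE.
by case: ifP => _; [rewrite sum_phi_normed | rewrite big1].
Qed.

Lemma Sop_ptrBC n (q : 'I_m -> 'I_n -> R) :
  Sop (ptrBC (rhoABC p phi q)) = \sum_j Sop (mixB (joint_col q j)).
Proof.
rewrite Sop_block.
  apply: eq_bigr => j _; apply: eq_Sop => a b.
  by rewrite /ptrBC /mixB /rhoABC /=; apply: eq_bigr => i _; rewrite !eqxx.
move=> x y x_ne_y; rewrite /ptrBC /rhoABC big1 // => i _.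
by rewrite (negbTE x_ne_y) andbF.
Qed.

Lemma Sop_rhoABC n (q : 'I_m -> 'I_n -> R) :
  Sop (rhoABC p phi q) = \sum_j Sop (mixAB (joint_col q j)).
Proof.
rewrite Sop_block.
  apply: eq_bigr => j _; apply: eq_Sop => a b.
  by rewrite /mixAB /rhoABC /= eqxx andbT.
by move=> x y x_ne_y; rewrite /rhoABC (negbTE x_ne_y) andbF.
Qed.

Lemma mutinfAC_cols n (q : 'I_m -> 'I_n -> R) : cond_distr q ->
  mutinfAC p phi q = \sum_i eta2 (p i) + \sum_j mutinf_part (joint_col q j).
Proof.
move=> q_distr; rewrite /mutinfAC /= Sop_ptrA // Sop_ptrC Sop_ptrAC.
by rewrite /mutinf_part sumrB addrA.
Qed.

Lemma condmutinfABgC_cols n (q : 'I_m -> 'I_n -> R) :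
  condmutinfABgC p phi q = \sum_j condmutinf_part (joint_col q j).
Proof.
rewrite /condmutinfABgC /= Sop_ptrAC Sop_ptrBC Sop_rhoABC Sop_ptrC.
by rewrite /condmutinf_part !sumrB big_split.
Qed.

Lemma psd_mixB (c : 'I_m -> R) : (forall i, 0 <= c i) -> psd_fun (mixB c).
Proof. by move=> c_ge0; exists 'I_m, c, phi. Qed.

Lemma psd_mixAB (c : 'I_m -> R) : (forall i, 0 <= c i) -> psd_fun (mixAB c).
Proof.
move=> c_ge0; exists 'I_m, c, (fun i x => if x.1 == i then phi i x.2 else 0).
split => // x y; rewrite /mixAB (bigD1 x.1) //= eqxx big1 ?addr0; last first.
  by move=> i /negbTE; rewrite eq_sym => ->; rewrite !mul0r mulr0.
case: (x.1 =P y.1) => [->|ne]; first by rewrite eqxx.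
by rewrite (introF eqP (nesym ne)) rmorph0 !mulr0.
Qed.

Lemma trace_mixB (c : 'I_m -> R) : \sum_b mixB c b b = (\sum_i c i)%:C.
Proof.
rewrite /mixB exchange_big rmorph_sum.
by apply: eq_bigr => i _; rewrite sum_phi_normed.
Qed.

Lemma trace_mixAB (c : 'I_m -> R) : \sum_x mixAB c x x = (\sum_i c i)%:C.
Proof.
rewrite /mixAB; under eq_bigr => x _ do rewrite eqxx.
rewrite -(pair_big xpredT xpredT (fun i b => (c i)%:C * (phi i b * (phi i b)^* ))) /=.
by rewrite rmorph_sum; apply: eq_bigr => i _; rewrite sum_phi_normed.
Qed.

Lemma mutinf_part0 : mutinf_part (fun=> 0) = 0.
Proof. by rewrite /mutinf_part big1_eq eta2_0 big1 ?subrr. Qed.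

Lemma condmutinf_part0 : condmutinf_part (fun=> 0) = 0.
Proof.
rewrite /condmutinf_part big1_eq eta2_0 big1 //.
rewrite (@eq_Sop _ _ (mixB (fun=> 0)) (fun _ _ => 0)); last first.
  by move=> x y; rewrite /mixB big1 // => i _; rewrite mul0r.
rewrite (@eq_Sop _ _ (mixAB (fun=> 0)) (fun _ _ => 0)); last first.
  by move=> x y; rewrite /mixAB; case: ifP; rewrite ?mul0r.
by rewrite !Sop0 !addr0 !subr0.
Qed.

Lemma sum_eta2M (a : R) (c : 'I_m -> R) : 0 <= a -> (forall i, 0 <= c i) ->
  \sum_i eta2 (a * c i) = a * \sum_i eta2 (c i) - a * (ln a / ln 2) * \sum_i c i.
Proof.
move=> a_ge0 c_ge0; rewrite !mulr_sumr -sumrB.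
by apply: eq_bigr => i _; rewrite eta2M.
Qed.

Lemma mutinf_partZ (a : R) (c : 'I_m -> R) : 0 <= a -> (forall i, 0 <= c i) ->
  mutinf_part (fun i => a * c i) = a * mutinf_part c.
Proof.
move=> a_ge0 c_ge0; rewrite /mutinf_part -mulr_sumr eta2M ?sumr_ge0 //.
by rewrite sum_eta2M //; ring.
Qed.

Lemma condmutinf_partZ (a : R) (c : 'I_m -> R) : 0 < a -> (forall i, 0 <= c i) ->
  condmutinf_part (fun i => a * c i) = a * condmutinf_part c.
Proof.
move=> a_gt0 c_ge0; rewrite /condmutinf_part -mulr_sumr eta2M ?sumr_ge0 ?ltW //.
rewrite sum_eta2M ?ltW //.
rewrite (@eq_Sop _ _ _ (fun x y => a%:C * mixB c x y)); last first.
  move=> x y; rewrite /mixB mulr_sumr; apply: eq_bigr => i _.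
  by rewrite rmorphM -mulrA.
rewrite (@eq_Sop _ _ (mixAB _) (fun x y => a%:C * mixAB c x y)); last first.
  move=> x y; rewrite /mixAB; case: ifP => _; last by rewrite mulr0.
  by rewrite rmorphM -mulrA.
rewrite (SopZ a_gt0 (psd_mixB c_ge0)) (SopZ a_gt0 (psd_mixAB c_ge0)).
rewrite trace_mixB trace_mixAB /=.
ring.
Qed.

End ColumnDecomposition.

Lemma sum_enum_val_support (V : nmodType) (T : finType) (S : {set T}) (F : T -> V) :
  (forall k, k \notin S -> F k = 0) ->
  \sum_(a < #|S|) F (enum_val a) = \sum_k F k.
Proof.
move=> F_supp; rewrite -(big_enum_val (A := mem S) F) /= [RHS](bigID (mem S)) /=.
by rewrite [X in _ = _ + X]big1 ?addr0.
Qed.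

Section Caratheodory.
Variable R : realFieldType.

Lemma max_feasible_step n (l nu : 'I_n -> R) :
  (forall k, 0 < l k) -> (exists k, nu k < 0) ->
  exists t, [/\ 0 < t, forall k, 0 <= l k + t * nu k & exists k, l k + t * nu k = 0].
Proof.
move=> l_gt0 [k1 nu_k1].
have [k0 nu_k0 k0_min] :=
  @arg_minP _ R _ k1 [pred k | nu k < 0] (fun k => l k / - nu k) nu_k1.
pose t := l k0 / - nu k0.
have nu_k0_neq0 : nu k0 != 0 by rewrite lt_eqF.
have t_gt0 : 0 < t by rewrite divr_gt0 // oppr_gt0.
exists t; split => //; last by exists k0; rewrite /t; field.
move=> k; case: (ltP (nu k) 0) => nu_k; last first.
  by apply: addr_ge0; [exact: ltW | exact: mulr_ge0 (ltW t_gt0) nu_k].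
have := k0_min k nu_k; rewrite -/t ler_pdivlMr ?oppr_gt0 // mulrN.
by rewrite -subr_ge0 opprK.
Qed.

Lemma exists_neg_coef n (nu a : 'I_n -> R) : (forall k, 0 < a k) ->
  \sum_k nu k * a k = 0 -> (exists k, nu k != 0) -> exists k, nu k < 0.
Proof.
move=> a_gt0 sum0 [k1 nu_k1].
case: (boolP [exists k, nu k < 0]) => [/existsP //|/existsPn nu_ge0].
have nu_a_ge0 k : 0 <= nu k * a k.
  by apply: mulr_ge0; [rewrite leNgt nu_ge0 | exact: ltW].
have /eqP := @psumr_eq0P _ _ xpredT _ (fun k _ => nu_a_ge0 k) sum0 k1 isT.
by rewrite mulf_eq0 (negbTE nu_k1) (gt_eqF (a_gt0 k1)).
Qed.

Variables (K N : nat) (v : 'I_N -> 'rV[R]_K) (g w : 'I_N -> R).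

Lemma exists_linear_relation n (s : 'I_n -> 'I_N) : (K.+1 < n)%N ->
  exists u : 'I_n -> R, [/\ exists k, u k != 0,
    \sum_k u k *: v (s k) = 0 & \sum_k u k * g (s k) = 0].
Proof.
move=> Kn.
pose M : 'M[R]_(n, K + 1) := row_mx (\matrix_(k, i) v (s k) 0 i) (\col_k g (s k)).
have : kermx M != 0.
  rewrite kermx_eq0 -row_leq_rank -ltnNge.
  by apply: (leq_ltn_trans (rank_leq_col M)); rewrite addn1.
case/rowV0Pn => u /sub_kermxP; rewrite mul_mx_row => /eqP; rewrite -row_mx0.
move=> /eqP /eq_row_mx [uv0 ug0] u_neq0.
exists (fun k => u 0 k); split.
- apply/existsP; apply: contraNT u_neq0 => /existsPn u0; apply/eqP/matrixP => i k.
  by rewrite ord1 mxE; apply/eqP; rewrite -[_ == _]negbK u0.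
- apply/matrixP => i j; rewrite ord1 summxE.
  transitivity ((u *m \matrix_(k, i) v (s k) 0 i) 0 j); last by rewrite uv0 !mxE.
  by rewrite !mxE; apply: eq_bigr => k _; rewrite !mxE.
- transitivity ((u *m \col_k g (s k)) 0 0); last by rewrite ug0 !mxE.
  by rewrite !mxE; apply: eq_bigr => k _; rewrite !mxE.
Qed.

Hypothesis v_pos : forall j, 0 < \sum_i v j 0 i.

Lemma exists_descent_direction n (s : 'I_n -> 'I_N) : (K.+1 < n)%N ->
  exists nu : 'I_n -> R, [/\ exists k, nu k < 0,
    \sum_k nu k *: v (s k) = 0, \sum_k nu k * g (s k) = 0 &
    \sum_k nu k * w (s k) <= 0].
Proof.
move=> Kn; have [u [[k u_k] u_v u_g]] := exists_linear_relation s Kn.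
pose sg : R := if \sum_k u k * w (s k) <= 0 then 1 else -1.
pose nu k := sg * u k.
have sg_neq0 : sg != 0 by rewrite /sg; case: ifP; rewrite ?oppr_eq0 oner_eq0.
have nu_v : \sum_k nu k *: v (s k) = 0.
  by under eq_bigr => k' _ do rewrite -scalerA; rewrite -scaler_sumr u_v scaler0.
exists nu; split => //.
- apply: (@exists_neg_coef _ _ (fun k => \sum_i v (s k) 0 i)) => //.
    under eq_bigr do rewrite mulr_sumr; rewrite exchange_big big1 // => i _.
    transitivity ((\sum_k nu k *: v (s k)) 0 i); last by rewrite nu_v mxE.
    by rewrite summxE; apply: eq_bigr => k' _; rewrite mxE.
  by exists k; rewrite mulf_neq0.
- by under eq_bigr => k' _ do rewrite -mulrA; rewrite -mulr_sumr u_g mulr0.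
- under eq_bigr => k' _ do rewrite -mulrA; rewrite -mulr_sumr /sg.
  case: ifP => [|/negbT]; first by rewrite mul1r.
  by rewrite -ltNge mulN1r oppr_le0 => /ltW.
Qed.

Lemma caratheodory_reduction n (s : 'I_n -> 'I_N) (l : 'I_n -> R) :
  (forall k, 0 < l k) ->
  exists n' (s' : 'I_n' -> 'I_N) (l' : 'I_n' -> R),
   [/\ (n' <= K.+1)%N, forall k, 0 < l' k,
    \sum_k l' k *: v (s' k) = \sum_k l k *: v (s k),
    \sum_k l' k * g (s' k) = \sum_k l k * g (s k) &
    \sum_k l' k * w (s' k) <= \sum_k l k * w (s k)].
Proof.
elim/ltn_ind: n s l => n IH s l l_gt0.
have [n_small|n_large] := leqP n K.+1; first by exists n, s, l.
have [nu [nu_neg nu_v nu_g nu_w]] := exists_descent_direction s n_large.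
have [t [t_gt0 l2_ge0 [k0 l2_k0]]] := max_feasible_step l_gt0 nu_neg.
pose l2 k := l k + t * nu k.
pose S := [set k | 0 < l2 k].
have S_small : (#|S| < n)%N.
  have : (#|S| <= #|[set~ k0]|)%N.
    apply/subset_leq_card/fintype.subsetP => k; rewrite !inE.
    by apply: contraTneq => ->; rewrite /l2 l2_k0 ltxx.
  by rewrite cardsC1 card_ord => /leq_ltn_trans; apply; rewrite prednK // (ltn_trans _ n_large).
have l2_supp k : k \notin S -> l2 k = 0.
  by rewrite inE => l2_le0; apply/eqP; rewrite eq_le l2_ge0 andbT leNgt.
have l2_S (a : 'I_#|S|) : 0 < l2 (enum_val a) by have := enum_valP a; rewrite inE.
have l2_shift (V : lmodType R) (X : 'I_N -> V) :
    \sum_(a < #|S|) l2 (enum_val a) *: X (s (enum_val a)) =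
    \sum_k l k *: X (s k) + t *: \sum_k nu k *: X (s k).
  rewrite (sum_enum_val_support (F := fun k => l2 k *: X (s k))) => [|k /l2_supp ->].
    by rewrite scaler_sumr -big_split /=; apply: eq_bigr => k _; rewrite scalerA -scalerDl.
  by rewrite scale0r.
have [n' [s' [l' [n'_small l'_gt0 l'_v l'_g l'_w]]]] :=
  IH #|S| S_small (fun a => s (enum_val a)) (fun a => l2 (enum_val a)) l2_S.
exists n', s', l'; split => //.
- by rewrite l'_v l2_shift nu_v scaler0 addr0.
- by rewrite l'_g (l2_shift R^o g) /= nu_g scaler0 addr0.
- rewrite (le_trans l'_w) // (l2_shift R^o w) /= gerDl.
  by rewrite pmulr_rle0.
Qed.
End Caratheodory.

Section ColumnReduction.
Variables (R : realFieldType) (m : nat) (F G : ('I_m -> R) -> R).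
Hypothesis FZ : forall a c, 0 < a -> (forall i, 0 <= c i) -> F (fun i => a * c i) = a * F c.
Hypothesis GZ : forall a c, 0 < a -> (forall i, 0 <= c i) -> G (fun i => a * c i) = a * G c.
Hypothesis F0 : F (fun=> 0) = 0.
Hypothesis G0 : G (fun=> 0) = 0.

Lemma caratheodory_columns n (c : 'I_n -> 'I_m -> R) : (forall j i, 0 <= c j i) ->
  exists n' (c' : 'I_n' -> 'I_m -> R),
    [/\ (n' <= m.+1)%N, forall k i, 0 <= c' k i,
        forall i, \sum_k c' k i = \sum_j c j i,
        \sum_k F (c' k) = \sum_j F (c j) & \sum_k G (c' k) <= \sum_j G (c j)].
Proof.
move=> c_ge0; pose S := [set j | 0 < \sum_i c j i].
have c_supp j : j \notin S -> c j = fun=> 0.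
  rewrite inE -leNgt => c_le0; apply/funext => i.
  apply: (@psumr_eq0P _ _ xpredT (c j) (fun k _ => c_ge0 j k)) => //.
  by apply/eqP; rewrite eq_le c_le0 sumr_ge0.
have sum_S (H : ('I_m -> R) -> R) : H (fun=> 0) = 0 ->
    \sum_(a < #|S|) H (c (enum_val a)) = \sum_j H (c j).
  by move=> H0; apply: (sum_enum_val_support (F := H \o c)) => j /c_supp /= ->.
pose v (a : 'I_#|S|) : 'rV[R]_m := \row_i c (enum_val a) i.
have v_pos a : 0 < \sum_i v a 0 i.
  by under eq_bigr do rewrite mxE; have := enum_valP a; rewrite inE.
have [n' [s' [l' [n'_small l'_gt0 l'_v l'_F l'_G]]]] :=
  caratheodory_reduction (fun a => F (c (enum_val a))) (fun a => G (c (enum_val a)))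
    v_pos id (fun=> ltr01).
exists n', (fun k i => l' k * c (enum_val (s' k)) i); split => //.
- by move=> k i; apply: mulr_ge0; [exact: ltW | exact: c_ge0].
- move=> i; have /matrixP/(_ 0 i) := l'_v; rewrite !summxE.
  under eq_bigr do rewrite !mxE; under [in X in _ = X -> _]eq_bigr do rewrite !mxE mul1r.
  by move=> ->; rewrite (sum_S (fun c => c i)).
- under eq_bigr do rewrite FZ //; rewrite l'_F.
  by under eq_bigr do rewrite mul1r; rewrite sum_S.
- under eq_bigr do rewrite GZ //; apply: (le_trans l'_G).
  by under eq_bigr do rewrite mul1r; rewrite sum_S.
Qed.

End ColumnReduction.

Lemma cond_distr_of_columns (R : realType) m n (p : 'I_m -> R) (c : 'I_n -> 'I_m -> R) :
  (0 < n)%N -> (forall k i, 0 <= c k i) -> (forall i, \sum_k c k i = p i) ->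
  exists q : 'I_m -> 'I_n -> R, cond_distr q /\ forall k i, p i * q i k = c k i.
Proof.
move=> n_gt0 c_ge0 c_sum.
have c0 i : p i = 0 -> forall k, c k i = 0.
  by rewrite -c_sum => sum0 k; apply: (@psumr_eq0P _ _ xpredT (c^~ i)) => // j _.
(* Where p i = 0 the row q i is unconstrained; take it uniform. *)
exists (fun i k => if p i == 0 then n%:R^-1 else c k i / p i); split; first split.
- move=> i k; case: eqP => [_|/eqP pi_neq0]; first by rewrite invr_ge0 ler0n.
  by rewrite divr_ge0 // -c_sum sumr_ge0.
- move=> i; case: eqP => [_|/eqP pi_neq0].
    by rewrite sumr_const card_ord -[LHS]mulr_natr mulVf // pnatr_eq0 -lt0n.
  by rewrite -mulr_suml c_sum mulfV.
- move=> k i; case: eqP => [pi0|/eqP pi_neq0]; first by rewrite pi0 mul0r c0.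
  by rewrite mulrC divfK.
Qed.

Section Reduction.
Variables (R : realType) (m d : nat) (p : 'I_m -> R) (phi : 'I_m -> 'I_d -> R[i]).
Hypothesis p_ge0 : forall i, 0 <= p i.
Hypothesis p_sum1 : \sum_(i : 'I_m) p i = 1.
Hypothesis phi_normed : forall i, \sum_(b : 'I_d) phi i b * (phi i b)^* = 1.

Lemma reduce_outcomes n (q : 'I_m -> 'I_n -> R) : cond_distr q ->
  exists n' (q' : 'I_m -> 'I_n' -> R),
    [/\ (n' <= m.+1)%N, cond_distr q', mutinfAC p phi q' = mutinfAC p phi q &
        condmutinfABgC p phi q' <= condmutinfABgC p phi q].
Proof.
move=> q_distr; have [q_ge0 _] := q_distr.
have col_ge0 j i : 0 <= joint_col p q j i := mulr_ge0 (p_ge0 i) (q_ge0 i j).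
have [n' [c' [n'_small c'_ge0 c'_sum c'_mutinf c'_condmutinf]]] :=
  caratheodory_columns (fun a c a_gt0 => mutinf_partZ (ltW a_gt0))
    (fun a c a_gt0 => condmutinf_partZ phi_normed a_gt0) mutinf_part0
    (condmutinf_part0 phi) col_ge0.
have {}c'_sum i : \sum_k c' k i = p i by rewrite c'_sum sum_joint_col.
have n'_gt0 : (0 < n')%N.
  rewrite lt0n; apply/eqP => n'0; subst n'.
  move: p_sum1; rewrite -(eq_bigr _ (fun i _ => c'_sum i)) big1 => [|i _].
    by move/eqP; rewrite eq_sym oner_eq0.
  exact: big_ord0.
have [q' [q'_distr q'_cols]] := cond_distr_of_columns n'_gt0 c'_ge0 c'_sum.
have col_q' k : joint_col p q' k = c' k by apply/funext => i; apply: q'_cols.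
exists n', q'; split => //.
- rewrite !mutinfAC_cols //; congr (_ + _).
  rewrite (eq_bigr _ (fun k _ => congr1 mutinf_part (col_q' k))).
  exact: c'_mutinf.
- rewrite !condmutinfABgC_cols //.
  rewrite (eq_bigr _ (fun k _ => congr1 (condmutinf_part phi) (col_q' k))).
  exact: c'_condmutinf.
Qed.

End Reduction.

Theorem proposition3p2 (R : realType) (m d : nat) (p : 'I_m -> R)
  (phi : 'I_m -> 'I_d -> R[i]) (Rate : R)
  (hp0 : forall i, 0 <= p i) (hp1 : \sum_(i : 'I_m) p i = 1)
  (hphi : forall i, \sum_(b : 'I_d) phi i b * (phi i b)^* = 1)
  (hR : 0 <= Rate) :
  M_E p phi Rate =
  ereal_inf [set x : \bar R | exists (n : nat) (q : 'I_m -> 'I_n -> R),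
    [/\ (n <= m.+1)%N, cond_distr q, mutinfAC p phi q <= Rate &
        x = (condmutinfABgC p phi q)%:E]].
Proof.
apply/eqP; rewrite eq_le; apply/andP; split.
  apply: ereal_inf_le_tmp => x [n [q [_ q_distr q_rate ->]]].
  by exists n, q.
apply: le_ereal_inf_tmp => x [n [q [q_distr q_rate ->]]].
have [n' [q' [n'_small q'_distr mutinf_eq condmutinf_le]]] :=
  reduce_outcomes hp0 hp1 hphi q_distr.
apply: ge_ereal_inf; exists (condmutinfABgC p phi q')%:E; last by rewrite lee_fin.
by exists n', q'; split => //; rewrite mutinf_eq.
Qed.
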